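(* Let $\mathbf{B}_1=\{S_1,C_3,S_5,S_7,\dots\}$ and $\mathbf{B}_2=\{S_1,S_3,S_5,S_7,\dots\}$. For each $n\ge1$, both $\mathcal{Y}(\mathbf{B}_1)$ and $\mathcal{Y}(\mathbf{B}_2)$ are bases of $\Gamma^n$.
   Context: For a finite simple graph $G$, $X_G$ is its chromatic symmetric function (the sum over proper colorings $\kappa$ of $\prod_v x_{\kappa(v)}$), $\omega$ is the involution on symmetric functions with $\omega(p_r)=(-1)^{r-1}p_r$, and $Y_G=(X_G+\omega(X_G))/2$. $\Gamma=\mathbb{Q}[p_1,p_3,\dots]$ and $\Gamma^n$ is its homogeneous degree-$n$ component. $OP(n)$ is the set of partitions of $n$ into odd parts. For a set $\mathbf{B}=\{G_1,G_3,G_5,\dots\}$ of graphs with $G_k$ having $k$ vertices, $\mathcal{Y}(\mathbf{B})=\{\prod_i Y_{G_{\lambda_i}} : \lambda=(\lambda_1,\lambda_2,\dots)\in OP(n)\}$. $C_3$ is the 3-cycle and $S_n$ the star tree on $n$ vertices (one internal vertex, $n-1$ leaves). *)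

From HB Require Import structures.
From mathcomp Require Import all_boot all_order all_algebra.
From Stdlib Require Import ClassicalEpsilon.
Set Implicit Arguments. Unset Strict Implicit. Unset Printing Implicit Defensive.
Import Order.TTheory GRing.Theory Num.Theory.
Local Open Scope ring_scope.

(* Symmetric functions of degree k are represented faithfully by their
   restriction to N >= k variables, viewed as polynomial functions
   ('I_N -> rat) -> rat (rat is infinite, so polynomial functions = polynomials). *)
Definition fn N := ('I_N -> rat) -> rat.

(* A simple graph on vertex set 'I_k is a symmetric irreflexive e : rel 'I_k. *)
Definition proper_col k N (e : rel 'I_k) (c : {ffun 'I_k -> 'I_N}) : bool :=
  [forall u, forall v, e u v ==> (c u != c v)].

Definition Xchrom k N (e : rel 'I_k) : fn N := fun x =>
  \sum_(c : {ffun 'I_k -> 'I_N} | proper_col e c) \prod_(v : 'I_k) x (c v).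

Definition psum N (r : nat) : fn N := fun x => \sum_(i < N) x i ^+ r.

(* Partitions of k in multiplicity form: m i = multiplicity of the part i+1. *)
Definition mpart k := {ffun 'I_k -> 'I_k.+1}.
Definition is_partn k (m : mpart k) : bool := (\sum_(i < k) i.+1 * m i)%N == k.
Definition lenp k (m : mpart k) : nat := (\sum_(i < k) m i)%N.
(* all parts odd: part i+1 is even iff i is odd *)
Definition oddp k (m : mpart k) : bool := [forall i : 'I_k, odd i ==> (m i == 0%N :> nat)].

Definition pmp k N (m : mpart k) : fn N := fun x =>
  \prod_(i < k) @psum N i.+1 x ^+ m i.

Definition in_pspan k N (f : fn N) (c : {ffun mpart k -> rat}) : Prop :=
  forall x, f x = \sum_(m | is_partn m) c m * @pmp k N m x.

(* the power-sum coefficients of f (unique when N >= k and f in the span) *)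
Definition pcoef k N (f : fn N) : {ffun mpart k -> rat} :=
  epsilon (inhabits [ffun => 0]) (@in_pspan k N f).

Definition omega k N (f : fn N) : fn N := fun x =>
  \sum_(m | is_partn m) (-1) ^+ (k - lenp m) * @pcoef k N f m * @pmp k N m x.

Definition Ygr k N (e : rel 'I_k) : fn N := fun x =>
  (@Xchrom k N e x + @omega k N (@Xchrom k N e) x) / 2%:R.

Definition star k : rel 'I_k := fun u v => (u != v) && ((val u == 0%N) || (val v == 0%N)).
Definition complete k : rel 'I_k := fun u v => u != v.

(* B1 = {S1, C3, S5, S7, ...}, B2 = {S1, S3, S5, ...}; only odd k are used *)
Definition B1 (k : nat) : rel 'I_k := if k == 3%N then @complete k else @star k.
Definition B2 (k : nat) : rel 'I_k := @star k.

Definition Yprod n (B : forall k, rel 'I_k) (m : mpart n) : fn n := fun x =>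
  \prod_(i < n) @Ygr i.+1 n (B i.+1) x ^+ m i.

Definition inGamma n (f : fn n) : Prop :=
  exists c : {ffun mpart n -> rat},
    forall x, f x = \sum_(m | is_partn m && oddp m) c m * @pmp n n m x.

Definition is_basis_Gamma n (F : mpart n -> fn n) : Prop :=
  [/\ forall m, is_partn m -> oddp m -> inGamma (F m),
      forall a : {ffun mpart n -> rat},
        (forall x, \sum_(m | is_partn m && oddp m) a m * F m x = 0) ->
        forall m, is_partn m -> oddp m -> a m = 0
    & forall f, inGamma f ->
        exists a : {ffun mpart n -> rat},
          forall x, f x = \sum_(m | is_partn m && oddp m) a m * F m x].

From mathcomp Require Import all_boot all_order all_algebra.
From mathcomp Require Import ring zify.
From Stdlib Require Import ClassicalEpsilon.
Set Implicit Arguments. Unset Strict Implicit. Unset Printing Implicit Defensive.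
Import GRing.Theory Num.Theory.
Local Open Scope ring_scope.

(* Everything is computed in the power-sum basis: with N >= n variables the
   p_lambda, lambda |- n, are linearly independent, so power-sum coefficients
   (hence omega and Y) can be read off any explicit expansion.  Explicitly,
     Y_(S_(k+1)) = sum_(j <= k, j even) C(k,j) p_1^(k-j) p_(j+1)  and
     Y_(C_3) = p_1^3 + 2 p_3,
   so for odd k, Y_(G_k) = c_k p_k + (odd p_mu with more parts), c_k <> 0.
   This triangularity with respect to the number of parts is preserved by
   products, so Y_lambda = c_lambda p_lambda + (odd p_mu, l(mu) > l(lambda)),
   and a family that is triangular in this sense is a basis of Gamma^n. *)

Lemma poly_eq0_of_vanishing (R : numDomainType) (p : {poly R}) :
  (forall t, p.[t] = 0) -> p = 0.
Proof.
move=> vanish; apply: (@roots_geq_poly_eq0 _ p [seq i%:R | i <- iota 0 (size p)]).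
- by apply/allP => z _; rewrite rootE vanish.
- by rewrite map_inj_uniq ?iota_uniq // => a b /eqP; rewrite eqr_nat => /eqP.
- by rewrite size_map size_iota.
Qed.

Definition cons_var N (t : rat) (y : 'I_N -> rat) : 'I_N.+1 -> rat :=
  fun i => if unlift ord0 i is Some j then y j else t.

Lemma psum_cons_var N r t y : psum r (cons_var t y) = t ^+ r + @psum N r y.
Proof.
rewrite /psum big_ord_recl /cons_var unlift_none; congr (_ + _).
by apply: eq_bigr => i _; rewrite liftK.
Qed.

(* [low_form j p a b]: p = a + b X^(j+1) modulo X^(j+2); this is all we need
   to know to read off the coefficient of X^(j+1) in a product. *)
Definition low_form (R : comNzRingType) (j : nat) (p : {poly R}) (a b : R) :=
  exists r, p = a%:P + b *: 'X^(j.+1) + 'X^(j.+2) * r.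

Section LowForm.
Variables (R : comNzRingType) (j : nat).
Implicit Types (p q : {poly R}) (a b c : R).

Lemma low_form_coef p a b : low_form j p a b -> p`_j.+1 = b.
Proof.
case=> r ->; rewrite !coefD coefC coefZ coefXn coefXnM eqxx mulr1 ltnSn.
by rewrite add0r addr0.
Qed.

Lemma low_form_eq p a b a' b' : low_form j p a b -> a = a' -> b = b' ->
  low_form j p a' b'.
Proof. by move=> ? <- <-. Qed.

Lemma low_form_mul p q a b a' b' : low_form j p a b -> low_form j q a' b' ->
  low_form j (p * q) (a * a') (a * b' + b * a').
Proof.
case=> r -> [r' ->].
exists (r * (a'%:P + b' *: 'X^(j.+1) + 'X^(j.+2) * r') + a%:P * r'
        + b%:P * 'X^j * 'X * r' + (b * b')%:P * 'X^j).
rewrite -!mul_polyC !polyCM polyCD polyCM !exprS.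
ring.
Qed.

Lemma low_form_one : low_form j (1 : {poly R}) 1 0.
Proof. by exists 0; rewrite mulr0 addr0 scale0r addr0. Qed.

Lemma low_form_linear c : low_form j ('X^(j.+1) + c%:P) c 1.
Proof. by exists 0; rewrite mulr0 addr0 scale1r addrC. Qed.

Lemma low_form_high k c : (j < k)%N -> low_form j ('X^(k.+1) + c%:P) c 0.
Proof.
move=> ltjk; exists ('X^(k.+1 - j.+2)).
by rewrite scale0r addr0 -exprD subnKC // addrC.
Qed.

Lemma low_form_pow_linear c e :
  low_form j (('X^(j.+1) + c%:P) ^+ e) (c ^+ e) (e%:R * c ^+ e.-1).
Proof.
elim: e => [|e IH]; first by rewrite expr0 mul0r; apply: low_form_one.
rewrite exprSr; apply: low_form_eq (low_form_mul IH (low_form_linear c)) _ _.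
  by rewrite exprSr.
case: e {IH} => [|e]; first by rewrite /=; ring.
by rewrite /= mulr1 exprSr [in RHS]mulrS; ring.
Qed.

Lemma low_form_pow_const p c e : low_form j p c 0 -> low_form j (p ^+ e) (c ^+ e) 0.
Proof.
move=> F; elim: e => [|e IH]; first by rewrite !expr0; apply: low_form_one.
rewrite !exprSr; apply: low_form_eq (low_form_mul IH F) _ _ => //.
by rewrite mulr0 mul0r addr0.
Qed.

End LowForm.

Lemma coef_prod_shifted (R : comNzRingType) K (j : 'I_K) (c : 'I_K -> R)
    (e : 'I_K -> nat) :
  (forall k : 'I_K, (k < j)%N -> e k = 0%N) ->
  (\prod_(k < K) ('X^(k.+1) + (c k)%:P) ^+ e k)`_j.+1 =
  (e j)%:R * \prod_(k < K) c k ^+ (e k - (k == j))%N.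
Proof.
move=> low.
rewrite (bigD1 j) //= [in RHS](bigD1 j) //= eqxx subn1.
have others : low_form j (\prod_(k < K | k != j) ('X^(k.+1) + (c k)%:P) ^+ e k)
                 (\prod_(k < K | k != j) c k ^+ e k) 0.
  apply: (big_ind2 (fun p a => low_form j p a 0)); first exact: low_form_one.
    move=> p1 a1 p2 a2 F G; apply: low_form_eq (low_form_mul F G) _ _ => //.
    by rewrite mulr0 mul0r addr0.
  move=> k nkj; case: (ltngtP k j) => [lt|gt|/val_inj eq].
  - by rewrite low // !expr0; apply: low_form_one.
  - by apply: low_form_pow_const; apply: low_form_high.
  - by rewrite eq eqxx in nkj.
rewrite (low_form_coef (low_form_mul (low_form_pow_linear j (c j) (e j)) others)).
rewrite mulr0 add0r -mulrA; congr (_ * (_ * _)); apply: eq_bigr => k nkj.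
by rewrite (negbTE nkj) subn0.
Qed.

Definition pmon N K (u : 'I_K -> nat) : fn N :=
  fun x => \prod_(k < K) psum k.+1 x ^+ u k.
Arguments pmon N {K} u _.

Definition weight K (u : 'I_K -> nat) : nat := (\sum_(k < K) k.+1 * u k)%N.

Lemma weight_split K (u : 'I_K -> nat) (k : 'I_K) :
  weight u = (k.+1 * u k + \sum_(l < K | l != k) l.+1 * u l)%N.
Proof. by rewrite /weight (bigD1 k). Qed.

Lemma weight_term K (u : 'I_K -> nat) (k : 'I_K) : (k.+1 * u k <= weight u)%N.
Proof. by rewrite (weight_split u k) leq_addr. Qed.

Section PowerSumIndependence.
Variables (I : finType) (K : nat).
Implicit Types (P : pred I) (mu : I -> 'I_K -> nat) (a : I -> rat).

Lemma pmon_indep_const N P mu a :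
  {in P &, forall i i', mu i =1 mu i' -> i = i'} ->
  (forall i, P i -> a i != 0 -> forall k, mu i k = 0%N) ->
  (forall x, \sum_(i | P i) a i * pmon N (mu i) x = 0) ->
  forall i, P i -> a i = 0.
Proof.
move=> inj const rel i Pi; apply/eqP/negP => /negP nz.
have := rel (fun _ => 0); rewrite (bigD1 i) //= big1.
  rewrite addr0 /pmon big1 ?mulr1; first by move/eqP; rewrite (negbTE nz).
  by move=> k _; rewrite const.
move=> i' /andP[Pi' ni']; have [->|nz'] := eqVneq (a i') 0; first by rewrite mul0r.
have e : i' = i by apply: inj => // k; rewrite !const.
by rewrite e eqxx in ni'.
Qed.

(* Adjoin a variable t and take the coefficient of t^(j+1): if no term with
   a nonzero coefficient involves p_1,...,p_j, a relation in N+1 variables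
   yields the relation sum a_i (mu_i j) p_(mu_i - e_j) = 0 in N variables. *)
Lemma pmon_relation_derive N P mu a (j : 'I_K) :
  (forall i, P i -> a i != 0 -> forall k : 'I_K, (k < j)%N -> mu i k = 0%N) ->
  (forall x, \sum_(i | P i) a i * pmon N.+1 (mu i) x = 0) ->
  forall y, \sum_(i | P i && (0 < mu i j)%N)
     (a i * (mu i j)%:R) * pmon N (fun k => mu i k - (k == j))%N y = 0.
Proof.
move=> low rel y.
pose Q i := \prod_(k < K) ('X^(k.+1) + (psum k.+1 y)%:P) ^+ mu i k.
have Q_rel : \sum_(i | P i) a i *: Q i = 0.
  apply: poly_eq0_of_vanishing => t; rewrite horner_sum -[RHS](rel (cons_var t y)).
  apply: eq_bigr => i _; rewrite hornerZ /Q horner_prod /pmon; congr (_ * _).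
  apply: eq_bigr => k _; rewrite horner_exp hornerD hornerXn hornerC.
  by rewrite psum_cons_var.
have := congr1 (fun p : {poly rat} => p`_j.+1) Q_rel.
rewrite /= coef0 coef_sum => E; rewrite -[RHS]E big_mkcondr /=; apply: eq_bigr => i Pi.
rewrite coefZ; have [->|nz] := eqVneq (a i) 0; first by rewrite !mul0r; case: ifP.
rewrite /Q (coef_prod_shifted (j := j)); last exact: low.
by case: posnP => [->|_]; rewrite ?mul0r ?mulr0 // /pmon mulrA.
Qed.

Lemma pmon_indep N P mu a :
  {in P &, forall i i', mu i =1 mu i' -> i = i'} ->
  (forall i, P i -> weight (mu i) <= N)%N ->
  (forall x, \sum_(i | P i) a i * pmon N (mu i) x = 0) ->
  forall i, P i -> a i = 0.
Proof.
(* In N+1 variables, show successively for j = 0, 1, ...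
   that no term with a nonzero coefficient involves p_(j+1): otherwise the
   derived relation in N variables would have a nonzero coefficient.  Then
   only the constant monomial can remain. *)
elim: N P mu a => [|N IH] P mu a inj wt rel.
  apply: pmon_indep_const inj _ rel => i Pi _ k.
  by have := leq_trans (weight_term (mu i) k) (wt i Pi); rewrite leqn0 muln_eq0 => /eqP.
have support_step (j : 'I_K) :
    (forall i, P i -> a i != 0 -> forall k : 'I_K, (k < j)%N -> mu i k = 0%N) ->
    forall i, P i -> a i != 0 -> mu i j = 0%N.
  move=> low i Pi nz; apply/eqP/negP => /negP; rewrite -lt0n => pos.
  pose mu' i (k : 'I_K) := (mu i k - (k == j))%N.
  have inj' : {in [pred i | P i && (0 < mu i j)%N] &,
                forall i i', mu' i =1 mu' i' -> i = i'}.
    move=> i1 i2 /andP[P1 p1] /andP[P2 p2] E; apply: inj => // k.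
    by have := E k; rewrite /mu'; case: (k =P j) => [->|_] /=; rewrite ?subn0 //; lia.
  have wt' i1 : P i1 && (0 < mu i1 j)%N -> (weight (mu' i1) <= N)%N.
    case/andP=> P1 p1; have := wt i1 P1.
    rewrite !(weight_split _ j) /mu' eqxx subn1.
    rewrite [X in (_ + X <= N)%N](eq_bigr (fun k : 'I_K => k.+1 * mu i1 k)%N)
      => [|k nk]; last first.
      by rewrite (negbTE nk) subn0.
    rewrite -[in X in X -> _](prednK p1) mulnS -addnA addSn ltnS.
    exact: leq_trans (leq_addl _ _).
  have := IH _ mu' _ inj' wt' (pmon_relation_derive low rel) i.
  rewrite /= Pi pos => /(_ isT) /eqP; rewrite mulf_eq0 (negbTE nz) pnatr_eq0 => /eqP mu0.
  by rewrite mu0 in pos.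
have support_low n i : P i -> a i != 0 -> forall k : 'I_K, (k < n)%N -> mu i k = 0%N.
  elim: n i => // n IHn i Pi nz k.
  rewrite ltnS leq_eqVlt => /orP[/eqP ekn|]; last exact: IHn.
  by apply: support_step => // i' Pi' nz' k'; rewrite ekn; apply: IHn.
apply: pmon_indep_const inj _ rel => i Pi nz k.
by apply: (support_low K).
Qed.

End PowerSumIndependence.

(* Exponent vectors u : 'I_(q+1) -> nat; u i is the multiplicity of the part
   i+1, and p_u = pmon N u is the corresponding power-sum monomial. *)
Definition expv q := {ffun 'I_q.+1 -> nat}.

Definition plen q (u : expv q) : nat := (\sum_(i < q.+1) u i)%N.

Definition odd_parts q (u : expv q) : bool :=
  [forall i : 'I_q.+1, odd i ==> (u i == 0%N)].

Definition vzero q : expv q := [ffun => 0%N].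
Definition vadd q (u v : expv q) : expv q := [ffun i => (u i + v i)%N].
Definition vscale q (e : nat) (u : expv q) : expv q := [ffun i => (e * u i)%N].
Definition unit_expv q (j : nat) : expv q :=
  [ffun i : 'I_q.+1 => nat_of_bool (i == j :> nat)].
(* the hook-like partition (j+1, 1^(k-j)) of k+1, indexing p_1^(k-j) p_(j+1) *)
Definition hook_expv q (k j : nat) : expv q :=
  vadd (unit_expv q j) (vscale (k - j) (unit_expv q 0)).

Section ExponentVectorAlgebra.
Variables (N q : nat).
Implicit Types (u v : expv q) (x : 'I_N -> rat).

Lemma pmon_zero x : pmon N (vzero q) x = 1.
Proof. by rewrite /pmon big1 // => i _; rewrite ffunE expr0. Qed.

Lemma pmon_add u v x : pmon N (vadd u v) x = pmon N u x * pmon N v x.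
Proof. by rewrite /pmon -big_split; apply: eq_bigr => i _; rewrite ffunE exprD. Qed.

Lemma pmon_scale e u x : pmon N (vscale e u) x = pmon N u x ^+ e.
Proof.
rewrite /pmon -prodrXl; apply: eq_bigr => i _.
by rewrite ffunE mulnC exprM.
Qed.

Lemma weight_add u v : weight (vadd u v) = (weight u + weight v)%N.
Proof. by rewrite /weight -big_split; apply: eq_bigr => i _; rewrite ffunE mulnDr. Qed.

Lemma weight_scale e u : weight (vscale e u) = (e * weight u)%N.
Proof.
rewrite /weight big_distrr; apply: eq_bigr => i _.
by rewrite ffunE mulnCA.
Qed.

Lemma plen_add u v : plen (vadd u v) = (plen u + plen v)%N.
Proof. by rewrite /plen -big_split; apply: eq_bigr => i _; rewrite ffunE. Qed.

Lemma plen_scale e u : plen (vscale e u) = (e * plen u)%N.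
Proof. by rewrite /plen big_distrr; apply: eq_bigr => i _; rewrite ffunE. Qed.

Lemma odd_parts_add u v : odd_parts u -> odd_parts v -> odd_parts (vadd u v).
Proof.
move=> /forallP U /forallP V; apply/forallP => i; apply/implyP => oi.
by rewrite ffunE (eqP (implyP (U i) oi)) (eqP (implyP (V i) oi)).
Qed.

Lemma odd_parts_scale e u : odd_parts u -> odd_parts (vscale e u).
Proof.
move=> /forallP U; apply/forallP => i; apply/implyP => oi.
by rewrite ffunE (eqP (implyP (U i) oi)) muln0.
Qed.

Lemma odd_parts_zero : odd_parts (vzero q).
Proof. by apply/forallP => i; rewrite ffunE implybT. Qed.

Section UnitVector.
Variables (j : nat) (hj : (j < q.+1)%N).

Lemma prod_unit_expv (F : 'I_q.+1 -> rat) :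
  \prod_(i < q.+1) F i ^+ unit_expv q j i = F (Ordinal hj).
Proof.
rewrite (bigD1 (Ordinal hj)) //= ffunE eqxx expr1 big1 ?mulr1 // => i ni.
rewrite ffunE; case: eqP => [e|_]; last exact: expr0.
by case/eqP: ni; apply: val_inj.
Qed.

Lemma sum_unit_expv (G : 'I_q.+1 -> nat) :
  (\sum_(i < q.+1) G i * unit_expv q j i = G (Ordinal hj))%N.
Proof.
rewrite (bigD1 (Ordinal hj)) //= ffunE eqxx muln1 big1 ?addn0 // => i ni.
rewrite ffunE; case: eqP => [e|_]; last exact: muln0.
by case/eqP: ni; apply: val_inj.
Qed.

Lemma pmon_unit x : pmon N (unit_expv q j) x = psum j.+1 x.
Proof. exact: (prod_unit_expv (fun i : 'I_q.+1 => psum i.+1 x)). Qed.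

Lemma weight_unit : weight (unit_expv q j) = j.+1.
Proof. exact: (sum_unit_expv (fun i : 'I_q.+1 => i.+1)). Qed.

Lemma plen_unit : plen (unit_expv q j) = 1%N.
Proof.
rewrite /plen -[RHS](sum_unit_expv (fun _ => 1%N)).
by apply: eq_bigr => i _; rewrite mul1n.
Qed.

End UnitVector.

Lemma odd_parts_unit j : ~~ odd j -> odd_parts (unit_expv q j).
Proof.
move=> ej; apply/forallP => i; apply/implyP => oi; rewrite ffunE.
by have [e|//] := eqVneq (i : nat) j; rewrite -e oi in ej.
Qed.

Section Hook.
Variables (k j : nat) (hj : (j < q.+1)%N) (hjk : (j <= k)%N).

Lemma pmon_hook x : pmon N (hook_expv q k j) x = psum 1 x ^+ (k - j) * psum j.+1 x.
Proof. by rewrite pmon_add pmon_scale !pmon_unit // mulrC. Qed.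

Lemma weight_hook : weight (hook_expv q k j) = k.+1.
Proof. by rewrite weight_add weight_scale !weight_unit // muln1; lia. Qed.

Lemma plen_hook : plen (hook_expv q k j) = (k - j).+1.
Proof. by rewrite plen_add plen_scale !plen_unit // muln1 add1n. Qed.

End Hook.

Lemma odd_parts_hook k j : ~~ odd j -> odd_parts (hook_expv q k j).
Proof. by move=> ej; rewrite odd_parts_add ?odd_parts_scale ?odd_parts_unit. Qed.

End ExponentVectorAlgebra.

(* Exponent vectors of weight q+1 are exactly the partitions of q+1. *)
Definition mpart_of q (u : expv q) : mpart q.+1 := [ffun i => inord (u i)].
Definition expv_of q (m : mpart q.+1) : expv q := [ffun i => nat_of_ord (m i)].

Section PartitionConversion.
Variable q : nat.
Implicit Types (u : expv q) (m : mpart q.+1).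

Lemma mpart_ofE u : weight u = q.+1 -> forall i, nat_of_ord (mpart_of u i) = u i.
Proof.
move=> wu i; rewrite ffunE inordK // ltnS -[X in (_ <= X)%N]wu.
exact: leq_trans (leq_pmull _ _) (weight_term u i).
Qed.

Lemma expv_of_mpart_of u : weight u = q.+1 -> expv_of (mpart_of u) = u.
Proof. by move=> wu; apply/ffunP => i; rewrite ffunE mpart_ofE. Qed.

Lemma mpart_of_expv_of m : mpart_of (expv_of m) = m.
Proof. by apply/ffunP => i; apply/val_inj; rewrite ffunE /= ffunE inord_val. Qed.

Lemma expv_of_inj : injective (@expv_of q).
Proof. exact: can_inj mpart_of_expv_of. Qed.

Lemma pmp_expv_of N m x : @pmp q.+1 N m x = pmon N (expv_of m) x.
Proof. by apply: eq_bigr => i _; rewrite ffunE. Qed.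

Lemma is_partn_weight m : is_partn m = (weight (expv_of m) == q.+1).
Proof.
by rewrite /is_partn /weight; congr (_ == _); apply: eq_bigr => i _; rewrite ffunE.
Qed.

Lemma lenp_plen m : lenp m = plen (expv_of m).
Proof. by apply: eq_bigr => i _; rewrite ffunE. Qed.

Lemma oddp_odd_parts m : oddp m = odd_parts (expv_of m).
Proof. by apply: eq_forallb => i; rewrite ffunE. Qed.

Lemma is_partn_mpart_of u : weight u = q.+1 -> is_partn (mpart_of u).
Proof. by move=> wu; rewrite is_partn_weight expv_of_mpart_of ?wu. Qed.

Lemma plen_le_weight u : (plen u <= weight u)%N.
Proof. by apply: leq_sum => i _; rewrite leq_pmull. Qed.

Lemma lenp_le_partn m : is_partn m -> (lenp m <= q.+1)%N.
Proof. by rewrite is_partn_weight lenp_plen => /eqP <-; apply: plen_le_weight. Qed.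

End PartitionConversion.

(* With at least q+1 variables the power-sum coefficients of a function of
   degree q+1 are unique; this is what makes omega well defined. *)
Lemma pcoef_unique q N (hN : (q.+1 <= N)%N) (f : fn N)
    (c c' : {ffun mpart q.+1 -> rat}) :
  in_pspan f c -> in_pspan f c' -> forall m, is_partn m -> c m = c' m.
Proof.
move=> Hc Hc' m Pm; apply/eqP; rewrite -subr_eq0; apply/eqP; move: m Pm.
apply: (@pmon_indep _ _ N (@is_partn q.+1) (@expv_of q) (fun m => c m - c' m)).
- by move=> m1 m2 _ _ E; apply: expv_of_inj; apply/ffunP.
- by move=> m; rewrite is_partn_weight => /eqP ->.
move=> x; rewrite (eq_bigr (fun m => c m * pmp m x - c' m * pmp m x)) => [|m _].
  by rewrite sumrB -Hc -Hc' subrr.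
by rewrite pmp_expv_of mulrBl.
Qed.

Section ExplicitExpansions.
Variables (q N : nat) (hN : (q.+1 <= N)%N).

Definition expansion (L : seq (rat * expv q)) (f : fn N) : Prop :=
  (forall p, p \in L -> weight p.2 = q.+1) /\
  (forall x, f x = \sum_(p <- L) p.1 * pmon N p.2 x).

Definition coef_of_list (L : seq (rat * expv q)) : {ffun mpart q.+1 -> rat} :=
  [ffun m => \sum_(p <- L) (mpart_of p.2 == m)%:R * p.1].

Lemma sum_pick_partn (m0 : mpart q.+1) (G : mpart q.+1 -> rat) : is_partn m0 ->
  \sum_(m | is_partn m) (m0 == m)%:R * G m = G m0.
Proof.
move=> P0; rewrite (bigD1 m0) //= eqxx mul1r big1 ?addr0 // => m /andP[_ nm].
by rewrite eq_sym (negbTE nm) mul0r.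
Qed.

Lemma sum_coef_of_list (L : seq (rat * expv q)) (s : mpart q.+1 -> rat) x :
  (forall p, p \in L -> weight p.2 = q.+1) ->
  \sum_(m | is_partn m) s m * coef_of_list L m * @pmp q.+1 N m x =
  \sum_(p <- L) s (mpart_of p.2) * p.1 * pmon N p.2 x.
Proof.
move=> wL; under eq_bigr => m _ do rewrite ffunE mulr_sumr mulr_suml.
rewrite exchange_big /=; apply: eq_big_seq => p pL.
have -> : pmon N p.2 x = @pmp q.+1 N (mpart_of p.2) x.
  by rewrite pmp_expv_of expv_of_mpart_of ?wL.
rewrite -(sum_pick_partn (fun m => s m * p.1 * @pmp q.+1 N m x));
  last by rewrite is_partn_mpart_of ?wL.
by apply: eq_bigr => m _; rewrite mulrCA !mulrA.
Qed.

Lemma in_pspan_expansion L f : expansion L f -> in_pspan f (coef_of_list L).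
Proof.
case=> wL fL x; rewrite fL.
under [RHS]eq_bigr => m _ do rewrite -[coef_of_list L m]mul1r.
rewrite (sum_coef_of_list (fun=> 1) x wL).
by apply: eq_big_seq => p _; rewrite mul1r.
Qed.

Lemma omega_expansion L f : expansion L f ->
  forall x, @omega q.+1 N f x =
    \sum_(p <- L) (-1) ^+ (q.+1 - plen p.2) * p.1 * pmon N p.2 x.
Proof.
move=> [wL fL] x; have cL := in_pspan_expansion (conj wL fL).
have cf : in_pspan f (@pcoef q.+1 N f) by apply: epsilon_spec; exists (coef_of_list L).
rewrite /omega (eq_bigr (fun m => (-1) ^+ (q.+1 - lenp m) * coef_of_list L m
                                  * @pmp q.+1 N m x)) => [|m Pm]; last first.
  by rewrite (pcoef_unique hN cf cL Pm).
rewrite (sum_coef_of_list (fun m => (-1) ^+ (q.+1 - lenp m)) x wL).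
apply: eq_big_seq => p pL.
by rewrite lenp_plen expv_of_mpart_of ?wL.
Qed.

(* Hence Y_G = (X_G + omega X_G)/2 keeps the terms p_u of X_G for which
   q+1-l(u) is even and kills the others. *)
Lemma Ygr_expansion (e : rel 'I_q.+1) L : expansion L (@Xchrom q.+1 N e) ->
  forall x, @Ygr q.+1 N e x =
    \sum_(p <- L) ((1 + (-1) ^+ (q.+1 - plen p.2)) / 2%:R) * p.1 * pmon N p.2 x.
Proof.
move=> XL x; rewrite /Ygr (omega_expansion XL) (proj2 XL) -big_split /= mulr_suml.
by apply: eq_bigr => p _; ring.
Qed.

End ExplicitExpansions.

Lemma psum_bigD1 N x (a : 'I_N) : psum 1 x = x a + \sum_(j | j != a) x j.
Proof. by rewrite /psum (bigD1 a) //= expr1; under eq_bigr do rewrite expr1. Qed.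

Lemma proper_col_star k N (c : {ffun 'I_k.+1 -> 'I_N}) :
  proper_col (@star k.+1) c = [forall v, (v != ord0) ==> (c v != c ord0)].
Proof.
apply/forallP/forallP => [proper v | leaves u].
  apply/implyP => nv; move/forallP/(_ ord0)/implyP: (proper v); apply.
  by rewrite /star nv orbT.
apply/forallP => v; apply/implyP => /andP[nuv /orP[/eqP u0|/eqP v0]].
  have eu : u = ord0 by apply: val_inj.
  by rewrite eu eq_sym; apply: (implyP (leaves v)); rewrite -eu eq_sym.
have ev : v = ord0 by apply: val_inj.
by rewrite ev; apply: (implyP (leaves u)); rewrite -ev.
Qed.

(* X_(S_(k+1)): choose the colour a of the centre, then any colour other
   than a for each of the k leaves. *)
Lemma X_star k N x :
  @Xchrom k.+1 N (@star k.+1) x = \sum_(a < N) x a * (psum 1 x - x a) ^+ k.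
Proof.
rewrite /Xchrom (partition_big (fun c : {ffun 'I_k.+1 -> 'I_N} => c ord0) predT) //=.
apply: eq_bigr => a _.
pose Q (v : 'I_k.+1) : pred 'I_N := fun j => if v == ord0 then j == a else j != a.
transitivity (\sum_(c in family Q) \prod_v x (c v)).
  apply: eq_bigl => c; rewrite proper_col_star.
  apply/andP/familyP => [[/forallP leaves /eqP ca] v | F].
    rewrite unfold_in /Q; case: eqP => [->|/eqP nv]; first by rewrite ca.
    by rewrite -ca; apply: (implyP (leaves v)).
  have ca : c ord0 = a by apply/eqP; have := F ord0; rewrite unfold_in /Q.
  split; last by rewrite ca.
  apply/forallP => v; apply/implyP => nv.
  by have := F v; rewrite unfold_in /Q (negbTE nv) ca.
rewrite -(bigA_distr_big_dep _ (fun _ j => x j)) big_ord_recl /= /Q eqxx big_pred1_eq.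
congr (_ * _).
rewrite (eq_bigr (fun _ => \sum_(j | j != a) x j)) => [|i _]; last first.
  by apply: eq_bigl => j; rewrite /= -(inj_eq val_inj).
by rewrite prodr_const card_ord (psum_bigD1 x a) addrC addKr.
Qed.

Lemma X_star_psum k N x : @Xchrom k.+1 N (@star k.+1) x =
  \sum_(j < k.+1) ((-1) ^+ j * ('C(k, j))%:R) * (psum 1 x ^+ (k - j) * psum j.+1 x).
Proof.
rewrite X_star; under eq_bigr => a _ do rewrite exprDn mulr_sumr.
rewrite exchange_big /=; apply: eq_bigr => j _.
rewrite [psum j.+1 x]/psum !mulr_sumr; apply: eq_bigr => a _.
by rewrite -[- x a]mulN1r exprMn -mulr_natr exprS; ring.
Qed.

Definition i0 : 'I_3 := ord0.
Definition i1 : 'I_3 := lift ord0 ord0.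
Definition i2 : 'I_3 := lift ord0 (lift ord0 ord0).

Lemma ord3_cases (v : 'I_3) : [\/ v = i0, v = i1 | v = i2].
Proof.
case: v => [[|[|[|//]]] h]; [apply: Or31|apply: Or32|apply: Or33]; exact: val_inj.
Qed.

Lemma proper_col_C3 N (c : {ffun 'I_3 -> 'I_N}) :
  proper_col (@complete 3) c = [&& c i0 != c i1, c i0 != c i2 & c i1 != c i2].
Proof.
apply/forallP/and3P => [proper | [n01 n02 n12] u].
  have edge u v : u != v -> c u != c v.
    by move=> nuv; move/forallP/(_ v)/implyP: (proper u); apply.
  by split; apply: edge.
apply/forallP => v; apply/implyP; rewrite /complete.
case: (ord3_cases u) => ->; case: (ord3_cases v) => ->;
  by rewrite //= => _; rewrite // eq_sym.
Qed.

(* X_(C_3) as a sum over the (distinct) colours a, b of the first two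
   vertices; the third vertex takes any remaining colour. *)
Lemma X_C3_pairs N x : @Xchrom 3 N (@complete 3) x =
  \sum_(a < N) \sum_(b < N)
     (if a == b then 0 else x a * (x b * (psum 1 x - x a - x b))).
Proof.
rewrite /Xchrom (partition_big (fun c : {ffun 'I_3 -> 'I_N} => c i0) predT) //=.
apply: eq_bigr => a _.
rewrite (partition_big (fun c : {ffun 'I_3 -> 'I_N} => c i1) predT) //=.
apply: eq_bigr => b _.
case: eqP => [<-|/eqP nab].
  rewrite big_pred0 // => c; rewrite proper_col_C3.
  apply/negP => /andP[/andP[/and3P[n01 _ _] /eqP e0] /eqP e1].
  by rewrite e0 e1 eqxx in n01.
pose Q (v : 'I_3) : pred 'I_N := fun j =>
  if val v == 0%N then j == a else if val v == 1%N then j == b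
  else (j != a) && (j != b).
transitivity (\sum_(c in family Q) \prod_v x (c v)).
  apply: eq_bigl => c; rewrite proper_col_C3; apply/andP/familyP.
    case=> /andP[/and3P[_ n02 n12] /eqP e0] /eqP e1 v; rewrite unfold_in /Q.
    by case: (ord3_cases v) => -> /=; rewrite -?e0 -?e1 ?eqxx // eq_sym n02 eq_sym n12.
  move=> F; move: (F i0) (F i1) (F i2); rewrite !unfold_in /Q /=.
  move=> /eqP e0 /eqP e1 /andP[n2a n2b].
  by rewrite e0 e1 nab eq_sym n2a eq_sym n2b !eqxx.
rewrite -(bigA_distr_big_dep _ (fun _ j => x j)).
rewrite !big_ord_recl big_ord0 /= mulr1 big_pred1_eq big_pred1_eq.
congr (_ * (_ * _)).
transitivity (\sum_(j | (j != a) && (j != b)) x j); first by apply: eq_bigl.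
rewrite (psum_bigD1 x a) [in RHS](bigD1 b) 1?eq_sym //=.
ring.
Qed.

Lemma sum_skip N (a : 'I_N) (G : 'I_N -> rat) :
  \sum_(b < N) (if a == b then 0 else G b) = \sum_(b < N) G b - G a.
Proof.
rewrite [in RHS](bigD1 a) //= (bigD1 a) //= eqxx add0r addrAC subrr add0r.
by apply: eq_bigr => b nb; rewrite eq_sym (negbTE nb).
Qed.

Lemma sum_cubic N (x : 'I_N -> rat) (al be ga : rat) :
  \sum_(a < N) (al * x a + be * x a ^+ 2 + ga * x a ^+ 3) =
  al * psum 1 x + be * psum 2 x + ga * psum 3 x.
Proof. by rewrite !big_split /= -!mulr_sumr /psum; congr (_ * _ + _ + _). Qed.

Lemma X_C3 N x : @Xchrom 3 N (@complete 3) x =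
  psum 1 x ^+ 3 - 3%:R * (psum 1 x * psum 2 x) + 2%:R * psum 3 x.
Proof.
rewrite X_C3_pairs; set p1 := psum 1 x.
under eq_bigr => a _ do rewrite sum_skip.
rewrite (eq_bigr (fun a => (p1 * p1) * x a + (- 2%:R * p1) * x a ^+ 2 + 2%:R * x a ^+ 3
          - psum 2 x * x a)) => [|a _]; last first.
  rewrite (eq_bigr (fun b => (x a * p1 - x a * x a) * x b + (- x a) * x b ^+ 2
          + 0 * x b ^+ 3)) => [|b _]; last by ring.
  by rewrite sum_cubic -/p1; ring.
rewrite sumrB sum_cubic -mulr_sumr -/p1.
have -> : \sum_(i < N) x i = p1.
  by rewrite /p1 /psum; apply: eq_bigr => i _; rewrite expr1.
ring.
Qed.

Lemma Y_star k N (hN : (k.+1 <= N)%N) x :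
  @Ygr k.+1 N (@star k.+1) x =
  \sum_(j < k.+1) (if odd j then 0 else ('C(k, j))%:R) *
     (psum 1 x ^+ (k - j) * psum j.+1 x).
Proof.
pose L : seq (rat * expv k) := [seq ((-1) ^+ j * ('C(k, j))%:R, hook_expv k k j)
                                 | j : 'I_k.+1 <- index_enum 'I_k.+1].
have XL : expansion L (@Xchrom k.+1 N (@star k.+1)).
  split=> [p /mapP[j _ ->]|y]; first by rewrite weight_hook // -ltnS.
  by rewrite X_star_psum /L big_map; apply: eq_bigr => j _; rewrite pmon_hook // -ltnS.
rewrite (Ygr_expansion hN XL) /L big_map; apply: eq_bigr => j _ /=.
have ljk : (j <= k)%N by rewrite -ltnS.
rewrite plen_hook // pmon_hook // subSS subKn // -signr_odd.
by case: (odd j); rewrite /= ?expr0 ?expr1 ?subrr ?mul0r //; field.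
Qed.

Lemma Y_C3 N (hN : (3 <= N)%N) x :
  @Ygr 3 N (@complete 3) x = psum 1 x ^+ 3 + 2%:R * psum 3 x.
Proof.
pose L : seq (rat * expv 2) := [:: (1, vscale 3 (unit_expv 2 0));
  (- 3%:R, vadd (unit_expv 2 0) (unit_expv 2 1)); (2%:R, unit_expv 2 2)].
have XL : expansion L (@Xchrom 3 N (@complete 3)).
  split=> [p|y].
    by rewrite !inE => /or3P[] /eqP -> /=; rewrite ?weight_add ?weight_scale !weight_unit.
  by rewrite X_C3 /L !big_cons big_nil /= pmon_add pmon_scale !pmon_unit //; ring.
rewrite (Ygr_expansion hN XL) /L !big_cons big_nil /= ?plen_add ?plen_scale !plen_unit //.
rewrite pmon_add pmon_scale !pmon_unit //= !expr0 expr1 expr2.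
by field.
Qed.

Definition lower_expansion N q (L : expv q) (C : rat) (f : fn N)
    (s : seq (rat * expv q)) : Prop :=
  (forall p, p \in s ->
     [/\ weight p.2 = weight L, odd_parts p.2 & (plen L < plen p.2)%N]) /\
  (forall x, f x = C * pmon N L x + \sum_(p <- s) p.1 * pmon N p.2 x).

Definition triangular N q (L : expv q) (C : rat) (f : fn N) : Prop :=
  odd_parts L /\ exists s, lower_expansion L C f s.

Section TriangularProducts.
Variables N q : nat.
Implicit Types (L : expv q) (f g : fn N).

Lemma triangular_ext L C f g : (forall x, f x = g x) ->
  triangular L C f -> triangular L C g.
Proof. by move=> E [oL [s [Hs Hf]]]; split=> //; exists s; split=> // x; rewrite -E. Qed.

Lemma triangular_one : triangular (vzero q) 1 (fun _ : 'I_N -> rat => 1).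
Proof.
split; first exact: odd_parts_zero.
by exists [::]; split=> // x; rewrite big_nil addr0 pmon_zero mulr1.
Qed.

(* The leading terms multiply; each cross term has more parts than L + L'. *)
Lemma triangular_mul L L' C C' f g : triangular L C f -> triangular L' C' g ->
  triangular (vadd L L') (C * C') (fun x => f x * g x).
Proof.
move=> [oL [s [Hs Hf]]] [oL' [s' [Hs' Hg]]]; split; first exact: odd_parts_add.
exists ([seq (C * p.1, vadd L p.2) | p <- s'] ++ [seq (C' * p.1, vadd p.2 L') | p <- s]
        ++ [seq (p.1 * p'.1, vadd p.2 p'.2) | p <- s, p' <- s']); split.
  move=> p; rewrite !mem_cat => /or3P[].
  - case/mapP => p' /Hs' [w o l] -> /=.
    by rewrite !weight_add !plen_add w ltn_add2l odd_parts_add.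
  - case/mapP => p' /Hs [w o l] -> /=.
    by rewrite !weight_add !plen_add w ltn_add2r odd_parts_add.
  - case/allpairsP => -[p1 p2] [/Hs [w o l] /Hs' [w' o' l'] ->] /=.
    rewrite !weight_add !plen_add w w' odd_parts_add //; split=> //.
    by rewrite -addSn; apply: leq_add l (ltnW l').
move=> x; rewrite Hf Hg !big_cat !big_map big_allpairs_dep /= pmon_add.
set SA := \sum_(p <- s) _; set SB := \sum_(p <- s') _.
have E1 : \sum_(p <- s') C * p.1 * pmon N (vadd L p.2) x = C * pmon N L x * SB.
  by rewrite /SB mulr_sumr; apply: eq_bigr => p _; rewrite pmon_add; ring.
have E2 : \sum_(p <- s) C' * p.1 * pmon N (vadd p.2 L') x = C' * pmon N L' x * SA.
  by rewrite /SA mulr_sumr; apply: eq_bigr => p _; rewrite pmon_add; ring.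
have E3 : \sum_(p <- s) \sum_(p' <- s') p.1 * p'.1 * pmon N (vadd p.2 p'.2) x
          = SA * SB.
  rewrite /SA mulr_suml; apply: eq_bigr => p _; rewrite mulr_sumr.
  by apply: eq_bigr => p' _; rewrite pmon_add; ring.
by rewrite E1 E2 E3; ring.
Qed.

Lemma triangular_pow L C f e : triangular L C f ->
  triangular (vscale e L) (C ^+ e) (fun x => f x ^+ e).
Proof.
move=> T; elim: e => [|e IH].
  have -> : vscale 0 L = vzero q by apply/ffunP => i; rewrite !ffunE.
  by apply: triangular_ext triangular_one => x; rewrite expr0.
have -> : vscale e.+1 L = vadd (vscale e L) L.
  by apply/ffunP => i; rewrite !ffunE mulSn addnC.
by rewrite exprSr; apply: triangular_ext (triangular_mul IH T) => x; rewrite exprSr.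
Qed.

Lemma triangular_prod (I : eqType) (r : seq I) (Lf : I -> expv q) (Cf : I -> rat)
    (F : I -> fn N) :
  (forall i, i \in r -> triangular (Lf i) (Cf i) (F i)) ->
  triangular [ffun j => \sum_(i <- r) Lf i j]%N (\prod_(i <- r) Cf i)
      (fun x => \prod_(i <- r) F i x).
Proof.
elim: r => [|i r IH] H.
  have -> : [ffun j => (\sum_(i <- [::]) Lf i j)%N] = vzero q.
    by apply/ffunP => j; rewrite !ffunE big_nil.
  by rewrite big_nil; apply: triangular_ext triangular_one => x; rewrite big_nil.
have -> : [ffun j => (\sum_(i0 <- i :: r) Lf i0 j)%N] =
          vadd (Lf i) [ffun j => (\sum_(i <- r) Lf i j)%N].
  by apply/ffunP => j; rewrite !ffunE big_cons.
rewrite big_cons; apply: triangular_ext (triangular_mul (H i (mem_head _ _)) (IH _)).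
  by move=> x; rewrite big_cons.
by move=> j jr; apply: H; rewrite inE jr orbT.
Qed.

End TriangularProducts.
Arguments triangular_one {N q}.

Section GeneratorsTriangular.
Variable q : nat.

Lemma triangular_star k (hk : (k < q.+1)%N) (ek : ~~ odd k) :
  triangular (unit_expv q k) 1 (@Ygr k.+1 q.+1 (@star k.+1)).
Proof.
split; first exact: odd_parts_unit.
exists [seq (('C(k, j))%:R, hook_expv q k j) | j <- iota 0 k & ~~ odd j]; split.
  move=> p /mapP[j]; rewrite mem_filter mem_iota add0n => /andP[ej /andP[_ ljk]] -> /=.
  have hj : (j < q.+1)%N by apply: ltn_trans hk.
  have ljk' : (j <= k)%N by apply: ltnW.
  rewrite weight_hook // weight_unit // plen_unit // plen_hook // odd_parts_hook //.
  by rewrite ltnS subn_gt0.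
move=> x; rewrite Y_star // big_ord_recr /= (negbTE ek) binn subnn expr0 mul1r.
rewrite pmon_unit // addrC; congr (_ + _).
rewrite big_map big_filter.
have -> : iota 0 k = index_iota 0 k by rewrite /index_iota subn0.
rewrite big_mkord [RHS]big_mkcond /=.
apply: eq_bigr => j _; have hj : (j < q.+1)%N by apply: ltn_trans hk.
by case: (odd j); rewrite /= ?mul0r // pmon_hook //; apply: ltnW.
Qed.

Lemma triangular_C3 (hq : (2 < q.+1)%N) :
  triangular (unit_expv q 2) 2%:R (@Ygr 3 q.+1 (@complete 3)).
Proof.
split; first exact: odd_parts_unit.
exists [:: (1, hook_expv q 2 0)]; split.
  move=> p; rewrite inE => /eqP -> /=.
  by rewrite weight_hook ?weight_unit ?plen_unit ?plen_hook ?odd_parts_hook.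
move=> x; rewrite Y_C3 // big_cons big_nil pmon_unit // pmon_hook //= subn0.
by rewrite expr2 exprS expr2; ring.
Qed.

Definition lead_B1 (i : nat) : rat := if i == 2%N then 2%:R else 1.

Lemma triangular_B1 (i : 'I_q.+1) : ~~ odd i ->
  triangular (unit_expv q i) (lead_B1 i) (@Ygr i.+1 q.+1 (@B1 i.+1)).
Proof.
case: i => [i hi] /= ei; rewrite /B1 /lead_B1 eqSS.
have [e|ne] := eqVneq i 2%N; last exact: triangular_star.
by subst i; apply: triangular_C3.
Qed.

Lemma triangular_B2 (i : 'I_q.+1) : ~~ odd i ->
  triangular (unit_expv q i) 1 (@Ygr i.+1 q.+1 (@B2 i.+1)).
Proof. by case: i => [i hi] /= ei; apply: triangular_star. Qed.

Lemma triangular_Yprod (B : forall k, rel 'I_k) (CB : nat -> rat)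
  (HB : forall i : 'I_q.+1, ~~ odd i ->
          triangular (unit_expv q i) (CB i) (@Ygr i.+1 q.+1 (B i.+1)))
  (m : mpart q.+1) : oddp m ->
  triangular (expv_of m) (\prod_(i < q.+1) CB i ^+ m i) (@Yprod q.+1 B m).
Proof.
move=> om.
have -> : expv_of m =
    [ffun j => \sum_(i <- index_enum 'I_q.+1) vscale (m i) (unit_expv q i) j]%N.
  apply/ffunP => j; rewrite !ffunE -[LHS]muln1.
  rewrite (bigD1 j) //= !ffunE eqxx big1 ?addn0 // => i nij.
  rewrite !ffunE; case: eqP => [/val_inj eij|_]; last by rewrite muln0.
  by rewrite eij eqxx in nij.
refine (triangular_ext _ (@triangular_prod q.+1 q _ (index_enum 'I_q.+1)
  (fun i => vscale (m i) (unit_expv q i)) (fun i => CB i ^+ m i)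
  (fun i x => @Ygr i.+1 q.+1 (B i.+1) x ^+ m i) _)) => [//|i _].
case: (boolP (odd i)) => oi; last exact/triangular_pow/HB.
have -> : nat_of_ord (m i) = 0%N by apply/eqP; move/forallP: om => /(_ i); rewrite oi.
have -> : vscale 0 (unit_expv q i) = vzero q by apply/ffunP => j; rewrite !ffunE.
by rewrite expr0; apply: triangular_ext triangular_one => x; rewrite expr0.
Qed.

End GeneratorsTriangular.

Definition span q (F : mpart q.+1 -> fn q.+1) (f : fn q.+1) : Prop :=
  exists a : {ffun mpart q.+1 -> rat},
    forall x, f x = \sum_(m | is_partn m && oddp m) a m * F m x.

Section SpanClosure.
Variables (q : nat) (F : mpart q.+1 -> fn q.+1).
Implicit Types f g : fn q.+1.

Lemma span_ext f g : (forall x, f x = g x) -> span F f -> span F g.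
Proof. by move=> E [a Ha]; exists a => x; rewrite -E. Qed.

Lemma span_gen m : is_partn m && oddp m -> span F (F m).
Proof.
move=> Pm; exists [ffun m' => (m' == m)%:R] => x.
rewrite (bigD1 m) //= ffunE eqxx mul1r big1 ?addr0 // => m' /andP[_ nm].
by rewrite ffunE (negbTE nm) mul0r.
Qed.

Lemma span_lin f g (c d : rat) : span F f -> span F g ->
  span F (fun x => c * f x + d * g x).
Proof.
move=> [a Ha] [b Hb]; exists [ffun m => c * a m + d * b m] => x.
rewrite Ha Hb !mulr_sumr -big_split /=; apply: eq_bigr => m _.
by rewrite ffunE; ring.
Qed.

Lemma span_scale f (c : rat) : span F f -> span F (fun x => c * f x).
Proof. by move=> H; apply: span_ext (span_lin c 0 H H) => x; rewrite mul0r addr0. Qed.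

Lemma span_sum (T : eqType) (r : seq T) (G : T -> fn q.+1) :
  (forall t, t \in r -> span F (G t)) -> span F (fun x => \sum_(t <- r) G t x).
Proof.
elim: r => [|t r IH] H.
  exists [ffun => 0] => x; rewrite big_nil big1 // => m _.
  by rewrite ffunE mul0r.
have H2 : span F (fun x => \sum_(t <- r) G t x).
  by apply: IH => t' tr; apply: H; rewrite inE tr orbT.
apply: span_ext (span_lin 1 1 (H t (mem_head _ _)) H2) => x.
by rewrite big_cons !mul1r.
Qed.

Lemma span_sum_partn (G : mpart q.+1 -> fn q.+1) :
  (forall m, is_partn m && oddp m -> span F (G m)) ->
  span F (fun x => \sum_(m | is_partn m && oddp m) G m x).
Proof.
move=> H.
apply: span_ext (span_sum (r := [seq m <- index_enum _ | is_partn m && oddp m]) _).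
  by move=> x; rewrite big_filter.
by move=> m; rewrite mem_filter => /andP[Pm _]; apply: H.
Qed.

End SpanClosure.

Section TriangularBasis.
Variables (q : nat) (F : mpart q.+1 -> fn q.+1) (lead : mpart q.+1 -> rat).
Hypothesis F_tri :
  forall m, is_partn m && oddp m -> triangular (expv_of m) (lead m) (F m).
Hypothesis lead_nz : forall m, lead m != 0.

Lemma lower_term (m : mpart q.+1) (u : expv q) : is_partn m && oddp m ->
  weight u = weight (expv_of m) -> odd_parts u -> (plen (expv_of m) < plen u)%N ->
  [/\ is_partn (mpart_of u) && oddp (mpart_of u), (lenp m < lenp (mpart_of u))%N
    & forall x, pmon q.+1 u x = @pmp q.+1 q.+1 (mpart_of u) x].
Proof.
case/andP; rewrite is_partn_weight => /eqP wm _; rewrite wm => wu ou lu.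
rewrite is_partn_mpart_of // oddp_odd_parts !lenp_plen !expv_of_mpart_of //.
by split=> // x; rewrite pmp_expv_of expv_of_mpart_of.
Qed.

Lemma F_inGamma (m : mpart q.+1) : is_partn m && oddp m -> inGamma (F m).
Proof.
move=> Pm; have [_ [s [Hs HF]]] := F_tri Pm.
have pm_span (u : expv q) : is_partn (mpart_of u) && oddp (mpart_of u) ->
    (forall x, pmon q.+1 u x = @pmp q.+1 q.+1 (mpart_of u) x) ->
    span (fun m => @pmp q.+1 q.+1 m) (pmon q.+1 u).
  by move=> Pu Eu; apply: span_ext (span_gen _ Pu) => x; rewrite Eu.
have lead_span : span (fun m => @pmp q.+1 q.+1 m) (pmon q.+1 (expv_of m)).
  by apply: pm_span => [|x]; rewrite ?mpart_of_expv_of // pmp_expv_of.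
have tail_span : span (fun m => @pmp q.+1 q.+1 m)
                      (fun x => \sum_(p <- s) p.1 * pmon q.+1 p.2 x).
  apply: span_sum => p ps; apply: span_scale.
  by have [w o l] := Hs p ps; have [Pp _ Ep] := lower_term Pm w o l; apply: pm_span.
by apply: span_ext (span_lin (lead m) 1 lead_span tail_span) => x; rewrite HF mul1r.
Qed.

(* Each p_m is a combination of the F m': invert the triangular relation,
   by induction on q+1 - l(m). *)
Lemma pmp_in_span (m : mpart q.+1) :
  is_partn m && oddp m -> span F (@pmp q.+1 q.+1 m).
Proof.
suff key d : forall m, is_partn m && oddp m -> (q.+1 - lenp m < d)%N ->
    span F (@pmp q.+1 q.+1 m).
  by move=> Pm; apply: (key (q.+1 - lenp m).+1).
elim: d => // d IHd {}m Pm lt; have [_ [s [Hs HF]]] := F_tri Pm.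
have tail_span : span F (fun x => \sum_(p <- s) p.1 * pmon q.+1 p.2 x).
  apply: span_sum => p ps; apply: span_scale.
  have [w o l] := Hs p ps; have [Pp lt1 Ep] := lower_term Pm w o l.
  apply: span_ext (IHd _ Pp _) => [x|]; first by rewrite Ep.
  by have := lenp_le_partn (proj1 (andP Pp)); lia.
apply: span_ext (span_lin (lead m)^-1 (- (lead m)^-1) (span_gen F Pm) tail_span).
by move=> x; rewrite HF pmp_expv_of; field; apply: lead_nz.
Qed.

Lemma lower_terms_exist : exists S : mpart q.+1 -> seq (rat * expv q),
  forall m, is_partn m && oddp m -> lower_expansion (expv_of m) (lead m) (F m) (S m).
Proof.
apply: (@fin_all_exists _ _
  (fun m s => is_partn m && oddp m -> lower_expansion (expv_of m) (lead m) (F m) s)).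
move=> m; case: (boolP (is_partn m && oddp m)) => [Pm|_]; last by exists [::].
by have [_ [s Hs]] := F_tri Pm; exists s.
Qed.

Definition tri_coef (m : mpart q.+1) (s : seq (rat * expv q)) (m' : mpart q.+1) : rat :=
  (m == m')%:R * lead m + \sum_(p <- s) p.1 * (mpart_of p.2 == m')%:R.

Lemma tri_coef_expansion m s : is_partn m && oddp m ->
  lower_expansion (expv_of m) (lead m) (F m) s ->
  forall x, F m x = \sum_(m' | is_partn m') tri_coef m s m' * @pmp q.+1 q.+1 m' x.
Proof.
move=> Pm [Hs HF] x; rewrite HF.
rewrite (eq_bigr (fun m' => (m == m')%:R * (lead m * @pmp q.+1 q.+1 m' x) +
    \sum_(p <- s) (mpart_of p.2 == m')%:R * (p.1 * @pmp q.+1 q.+1 m' x))).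
  rewrite big_split /= sum_pick_partn ?(proj1 (andP Pm)) // pmp_expv_of.
  congr (_ + _); rewrite exchange_big /=; apply: eq_big_seq => p ps.
  have [w o l] := Hs p ps; have [Pp _ Ep] := lower_term Pm w o l.
  by rewrite sum_pick_partn ?Ep // (proj1 (andP Pp)).
move=> m' _; rewrite mulrDl mulr_suml; congr (_ + _); first by ring.
by apply: eq_bigr => p _; ring.
Qed.

Lemma tri_coef_short m s m0 : is_partn m && oddp m ->
  lower_expansion (expv_of m) (lead m) (F m) s -> (lenp m0 <= lenp m)%N ->
  tri_coef m s m0 = (m == m0)%:R * lead m.
Proof.
move=> Pm [Hs _] le0; rewrite /tri_coef big_seq big1 ?addr0 // => p ps.
have [w o l] := Hs p ps; have [_ lt1 _] := lower_term Pm w o l.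
by case: eqP => [e|_]; [move: lt1 le0; rewrite e; lia | rewrite mulr0].
Qed.

(* The F m are linearly independent: in a relation, the coefficient of p_m0
   for m0 of minimal length l(m0) among the terms of the relation is
   a m0 * lead m0. *)
Lemma F_indep (a : {ffun mpart q.+1 -> rat}) :
  (forall x, \sum_(m | is_partn m && oddp m) a m * F m x = 0) ->
  forall m, is_partn m -> oddp m -> a m = 0.
Proof.
move=> rel; have [S HS] := lower_terms_exist.
pose b m' := \sum_(m | is_partn m && oddp m) a m * tri_coef m (S m) m'.
have b0 : forall m', is_partn m' -> b m' = 0.
  apply: (@pmon_indep _ _ q.+1 (@is_partn q.+1) (@expv_of q) b).
  - by move=> m1 m2 _ _ E; apply: expv_of_inj; apply/ffunP.
  - by move=> m; rewrite is_partn_weight => /eqP ->.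
  move=> x; rewrite -[RHS](rel x) /b.
  under eq_bigr => m' _ do rewrite mulr_suml -pmp_expv_of.
  rewrite exchange_big /=; apply: eq_bigr => m Pm.
  rewrite (tri_coef_expansion Pm (HS m Pm)) mulr_sumr.
  by apply: eq_bigr => m' _; rewrite mulrA.
suff low_len l m0 : is_partn m0 && oddp m0 -> (lenp m0 < l)%N -> a m0 = 0.
  by move=> m0 P0 O0; apply: (low_len (lenp m0).+1); rewrite ?P0.
elim: l m0 => // l IHl m0 P0 lt.
have := b0 m0 (proj1 (andP P0)); rewrite /b (bigD1 m0) //= big1 => [|m /andP[Pm nm]].
  rewrite (tri_coef_short P0 (HS m0 P0)) // eqxx mul1r addr0 => /eqP.
  by rewrite mulf_eq0 (negbTE (lead_nz m0)) orbF => /eqP.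
have [->|nz] := eqVneq (a m) 0; first by rewrite mul0r.
have lm : (l <= lenp m)%N.
  by rewrite leqNgt; apply/negP => lml; rewrite (IHl m Pm lml) eqxx in nz.
by rewrite (tri_coef_short Pm (HS m Pm)) ?(negbTE nm) ?mul0r ?mulr0 //; lia.
Qed.

Theorem triangular_basis : is_basis_Gamma F.
Proof.
split; [by move=> m Pm Om; apply: F_inGamma; rewrite Pm | exact: F_indep |].
move=> f [c Hc]; apply: span_ext (fun x => esym (Hc x)) _.
by apply: span_sum_partn => m Pm; apply/span_scale/pmp_in_span.
Qed.

End TriangularBasis.

Lemma Yprod_basis q (B : forall k, rel 'I_k) (CB : nat -> rat) :
  (forall i : 'I_q.+1, ~~ odd i ->
     triangular (unit_expv q i) (CB i) (@Ygr i.+1 q.+1 (B i.+1))) ->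
  (forall i, CB i != 0) -> is_basis_Gamma (@Yprod q.+1 B).
Proof.
move=> B_tri CB_nz.
apply: (@triangular_basis q _ (fun m => \prod_(i < q.+1) CB i ^+ m i)).
  by move=> m /andP[_ om]; apply: triangular_Yprod.
by move=> m; rewrite prodf_seq_neq0; apply/allP => i _; rewrite expf_neq0.
Qed.

Theorem mainTheorem6 (n : nat) (hn : (0 < n)%N) :
  @is_basis_Gamma n (@Yprod n B1) /\ @is_basis_Gamma n (@Yprod n B2).
Proof.
case: n hn => [//|q] _; split.
  apply: (@Yprod_basis q (@B1) lead_B1) => [i|i]; first exact: triangular_B1.
  by rewrite /lead_B1; case: ifP; rewrite ?pnatr_eq0 ?oner_eq0.
apply: (@Yprod_basis q (@B2) (fun=> 1)) => [i|i]; first exact: triangular_B2.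
exact: oner_neq0.
Qed.
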